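(* Let $q\geq 2$ and $N,n$ be positive integers. Then $f_{q,q-1}(N)\leq n$ if and only if $F_{q,q-1}(n)\geq N$.
   Context: $[n]=\{1,\dots,n\}$. An ordered complete graph on $N$ vertices is the complete graph on $[N]$ with its natural order; a path in it is monotone if its vertices, in traversal order, are strictly increasing; its length is its number of vertices. For a $q$-edge-colored ordered complete graph $K$ (colors in $[q]$), $f_{q,r}(K)$ is the maximum length of a monotone path in $K$ whose edges use at most $r$ colors, and $f_{q,r}(N)$ is the minimum of $f_{q,r}(K)$ over all $q$-edge-colored ordered complete graphs $K$ on $N$ vertices. For $x,y\in\mathbb{R}^q$, $x<_r y$ means there are at least $r$ coordinates $i$ with $x_i<y_i$; $F_{q,r}(n)$ is the maximum $N$ such that there exist $x_1,\dots,x_N\in[n]^q$ with $x_a<_r x_b$ for all $a<b$. *)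

From mathcomp Require Import all_boot.
Set Implicit Arguments. Unset Strict Implicit. Unset Printing Implicit Defensive.

(* Vertices of the ordered complete graph on [N] are 'I_N (i.e. 0..N-1, with
   the natural order; shift by one from the paper).
   A q-edge-colouring assigns to every edge {a,b} with a < b the colour
   c (a, b); the values c (a, b) for a >= b are irrelevant. *)
Definition coloring (q N : nat) := {ffun 'I_N * 'I_N -> 'I_q}.

Definition path_colors (q N : nat) (c : coloring q N) (s : seq 'I_N) : seq 'I_q :=
  [seq c e | e <- zip s (behead s)].

Definition good_path (q r N : nat) (c : coloring q N) (s : seq 'I_N) : bool :=
  sorted (fun a b : 'I_N => (a < b)%N) s && (size (undup (path_colors c s)) <= r).

(* f_{q,r}(K): maximum length (number of vertices) of such a path.  A
   monotone path in K_N has at most N vertices. *)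
Definition f_K (q r N : nat) (c : coloring q N) : nat :=
  \max_(k < N.+1 | [exists s : k.-tuple 'I_N, good_path r c s]) k.

Definition f_N (q r N : nat) : nat :=
  \big[minn/N]_(c : coloring q N) f_K r c.

Definition lt_r (q n r : nat) (x y : {ffun 'I_q -> 'I_n}) : bool :=
  (r <= #|[set i | x i < y i]|)%N.

Definition r_chain (q n r N : nat) (x : N.-tuple {ffun 'I_q -> 'I_n}) : bool :=
  [forall a : 'I_N, forall b : 'I_N, (a < b)%N ==> lt_r r (tnth x a) (tnth x b)].

(* F_{q,r}(n): the maximum such N.  For r >= 1 the x_a are pairwise distinct,
   so N <= #|[n]^q| = n^q and the maximum is attained below this bound. *)
Definition F_N (q r n : nat) : nat :=
  \max_(N < (n ^ q).+1 | [exists x : N.-tuple {ffun 'I_q -> 'I_n}, r_chain r x]) N.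

(* For a colouring c and a colour i, let L_i(v) be the number of vertices of a
   longest monotone path ending at v whose edges avoid colour i.  A path uses at
   most q-1 colours exactly when it avoids some colour, so f(c) <= n forces
   L_i(v) <= n; and if the edge ab (a < b) has colour j, appending b to a path
   ending at a gives L_i(a) < L_i(b) for every i <> j.  Hence the points
   (L_i(v) - 1)_i form a (q-1)-chain of length N in [n]^q.  Conversely, given
   such a chain x_1, ..., x_N, colour the edge ab (a < b) by a coordinate in
   which x_a is not below x_b (there is at most one); along a monotone path
   avoiding colour i the i-th coordinate strictly increases, so the path has at
   most n vertices. *)

From mathcomp Require Import all_boot zify.
Set Implicit Arguments. Unset Strict Implicit. Unset Printing Implicit Defensive.

Lemma bigmax_witness (I : finType) (P : pred I) (F : I -> nat) i0 :
  P i0 -> exists2 i, P i & \max_(j | P j) F j = F i.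
Proof.
move=> Pi0; exists [arg max_(i > i0 | P i) F i]; last exact: bigmax_eq_arg.
by case: arg_maxnP.
Qed.

Lemma bigmin_leqP (I : finType) (d m : nat) (F : I -> nat) :
  reflect (d <= m \/ exists i, F i <= m) (\big[minn/d]_i F i <= m).
Proof.
apply: (iffP idP) => [|[le_dm | [i le_Fim]]].
- elim/big_ind: _ => [|x y IHx IHy|i _ le_Fim]; [by left| |by right; exists i].
  by rewrite geq_min => /orP[/IHx | /IHy].
- apply: leq_trans le_dm; elim/big_rec: _ => // i x _ le_xd.
  by rewrite geq_min le_xd orbT.
- apply: leq_trans le_Fim; move: (mem_index_enum i).
  elim: (index_enum I) => [//|j r IHr]; rewrite inE big_cons => /predU1P[-> | /IHr].
    exact: geq_minl.
  exact/leq_trans/geq_minr.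
Qed.

Lemma size_sorted_ord N (s : seq 'I_N) :
  sorted (fun a b : 'I_N => a < b) s -> size s <= N.
Proof.
move=> s_sorted; have s_uniq : uniq s.
  by apply: sorted_uniq s_sorted; [exact: ltn_trans | exact: ltnn].
by rewrite -(card_uniqP s_uniq) -[leqRHS]card_ord max_card.
Qed.

Lemma size_undup_lt_card (T : finType) (s : seq T) :
  (size (undup s) < #|T|) = [exists x, x \notin s].
Proof.
rewrite -(card_uniqP (undup_uniq s)) (eq_card (mem_undup s)) -(cardC (mem s)).
rewrite -[X in X < _]addn0 ltn_add2l.
by apply/card_gt0P/existsP => -[x xNs]; exists x.
Qed.

Section Paths.
Variables (q N : nat) (c : coloring q N).

Lemma path_colors_rcons2 (t : seq 'I_N) a b :
  path_colors c (rcons (rcons t a) b) = rcons (path_colors c (rcons t a)) (c (a, b)).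
Proof. by elim: t => [|x [|y t] IHt] //; rewrite /path_colors /= in IHt *; rewrite IHt. Qed.

Definition avoids (i : 'I_q) (s : seq 'I_N) : bool :=
  sorted (fun a b : 'I_N => a < b) s && (i \notin path_colors c s).

Lemma good_path_predE s : 0 < q -> good_path (q - 1) c s = [exists i, avoids i s].
Proof.
move=> q_gt0; rewrite /good_path leq_subRL // add1n -[q in _ < q]card_ord.
rewrite size_undup_lt_card; apply/andP/existsP => [[s_sorted /existsP[i iNs]] | [i /andP[]]].
  by exists i; rewrite /avoids s_sorted.
by move=> s_sorted iNs; split=> //; apply/existsP; exists i.
Qed.

Lemma f_K_leP r m :
  reflect (forall s, good_path r c s -> size s <= m) (f_K r c <= m).
Proof.
rewrite /f_K; apply: (iffP (bigmax_leqP _ _ _)) => [le_m s s_good | le_m k /existsP[t t_good]].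
  have s_lt : size s < N.+1 by rewrite ltnS size_sorted_ord //; case/andP: s_good.
  by apply: (le_m (Ordinal s_lt)); apply/existsP; exists (in_tuple s).
by rewrite -(size_tuple t); apply: le_m.
Qed.

End Paths.

Lemma f_N_leP q r N n : 0 < q ->
  reflect (exists c : coloring q N, f_K r c <= n) (f_N q r N <= n).
Proof.
move=> q_gt0; apply: (iffP (bigmin_leqP _ _ _)) => [[le_Nn | //] | [c le_cn]]; last first.
  by right; exists c.
exists [ffun=> Ordinal q_gt0]; apply: leq_trans le_Nn.
by apply/bigmax_leqP => k _; apply: leq_ord.
Qed.

Section Chains.
Variables (q n : nat).
Implicit Types x y : {ffun 'I_q -> 'I_n}.

Lemma lt_r_neq r x y : 0 < r -> lt_r r x y -> x != y.
Proof.
move=> r_gt0 /(leq_trans r_gt0); rewrite card_gt0 => /set0Pn[i]; rewrite inE.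
by apply: contraTneq => ->; rewrite ltnn.
Qed.

Lemma lt_r_pred_coord x y j i : lt_r (q - 1) x y -> y j <= x j -> i != j -> x i < y i.
Proof.
move=> xy yx_j ij; have sub : [set k | x k < y k] \subset [set~ j].
  by apply/subsetP => k; rewrite !inE; apply: contraTneq => ->; rewrite -leqNgt.
have : [set k | x k < y k] == [set~ j].
  by rewrite eqEcard sub cardsC1 card_ord -subn1.
by move/eqP/setP/(_ i); rewrite !inE ij.
Qed.

Lemma r_chainP r N (x : N.-tuple {ffun 'I_q -> 'I_n}) :
  reflect (forall a b : 'I_N, a < b -> lt_r r (tnth x a) (tnth x b)) (r_chain r x).
Proof.
apply: (iffP forallP) => [chain a b | chain a]; first by move: (chain a) => /forallP/(_ b)/implyP.
by apply/forallP => b; apply/implyP/chain.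
Qed.

Lemma r_chain_length_le r N (x : N.-tuple {ffun 'I_q -> 'I_n}) :
  0 < r -> r_chain r x -> N <= n ^ q.
Proof.
move=> r_gt0 /r_chainP chain; have tnth_inj : injective (tnth x).
  move=> a b; case: (ltngtP a b) => [ab | ba | /val_inj //] xab.
    by have := lt_r_neq r_gt0 (chain a b ab); rewrite xab eqxx.
  by have := lt_r_neq r_gt0 (chain b a ba); rewrite xab eqxx.
by have := leq_card _ tnth_inj; rewrite card_ffun !card_ord.
Qed.

Lemma F_N_ge r N (x : N.-tuple {ffun 'I_q -> 'I_n}) :
  0 < r -> r_chain r x -> N <= F_N q r n.
Proof.
move=> r_gt0 chain; have N_lt : N < (n ^ q).+1 by rewrite ltnS (r_chain_length_le r_gt0 chain).
by apply: (bigmax_sup (Ordinal N_lt)) => //; apply/existsP; exists x.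
Qed.

Lemma F_N_witness r N :
  N <= F_N q r n -> exists x : N.-tuple {ffun 'I_q -> 'I_n}, r_chain r x.
Proof.
pose P (k : 'I_(n ^ q).+1) := [exists x : k.-tuple {ffun 'I_q -> 'I_n}, r_chain r x].
have P0 : P ord0 by apply/existsP; exists [tuple]; apply/r_chainP => -[].
have [k /existsP[x /r_chainP chain] max_k] := bigmax_witness (fun k => nat_of_ord k) P0.
rewrite /F_N -/P max_k => le_Nk; exists [tuple tnth x (widen_ord le_Nk a) | a < N].
by apply/r_chainP => a b ab; rewrite !tnth_mktuple; apply: chain.
Qed.

End Chains.

Section AvoidDepth.
Variables (q N : nat) (c : coloring q N).

(* [avoid_depth i v] is L_i(v) - 1. *)
Definition avoid_depth (i : 'I_q) (v : 'I_N) : nat :=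
  \max_(k < N | [exists t : k.-tuple 'I_N, avoids c i (rcons t v)]) k.

Lemma avoid_depth_ge i v t : avoids c i (rcons t v) -> size t <= avoid_depth i v.
Proof.
move=> t_avoids; have t_lt : size t < N.
  by rewrite -(size_rcons t v); apply: size_sorted_ord; case/andP: t_avoids.
by apply: (bigmax_sup (Ordinal t_lt)) => //; apply/existsP; exists (in_tuple t).
Qed.

Lemma avoid_depth_witness i v :
  exists2 t, avoids c i (rcons t v) & size t = avoid_depth i v.
Proof.
pose P (k : 'I_N) := [exists t : k.-tuple 'I_N, avoids c i (rcons t v)].
have P0 : P (Ordinal (leq_ltn_trans (leq0n v) (ltn_ord v))).
  by apply/existsP; exists [tuple].
have [k /existsP[t t_avoids] max_k] := bigmax_witness (fun k => nat_of_ord k) P0.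
by exists t; rewrite // /avoid_depth -/P max_k size_tuple.
Qed.

Lemma avoid_depth_lt n i v : f_K (q - 1) c <= n -> avoid_depth i v < n.
Proof.
move=> /f_K_leP le_n; have [t t_avoids <-] := avoid_depth_witness i v.
rewrite -ltnS -(size_rcons t v); apply: le_n.
by rewrite good_path_predE ?(leq_ltn_trans (leq0n i)) //; apply/existsP; exists i.
Qed.

Lemma avoid_depth_step i (a b : 'I_N) :
  a < b -> i != c (a, b) -> avoid_depth i a < avoid_depth i b.
Proof.
move=> ab iNab; have [t /andP[t_sorted iNt] <-] := avoid_depth_witness i a.
rewrite -(size_rcons t a); apply: avoid_depth_ge.
rewrite /avoids path_colors_rcons2 mem_rcons inE negb_or iNab {}iNt andbT.
case: t t_sorted => [|x t] /= t_sorted; first by rewrite ab.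
by rewrite andbT rcons_path t_sorted last_rcons.
Qed.

Definition depth_point n (le_n : f_K (q - 1) c <= n) (v : 'I_N) : {ffun 'I_q -> 'I_n} :=
  [ffun i => Ordinal (avoid_depth_lt i v le_n)].

Lemma depth_chain n (le_n : f_K (q - 1) c <= n) :
  r_chain (q - 1) [tuple depth_point le_n v | v < N].
Proof.
apply/r_chainP => a b ab; rewrite !tnth_mktuple /lt_r.
have <- : #|[set~ c (a, b)]| = q - 1 by rewrite cardsC1 card_ord subn1.
apply/subset_leq_card/subsetP => i; rewrite !inE !ffunE; exact: avoid_depth_step.
Qed.

End AvoidDepth.

Section ChainColoring.
Variables (q n N : nat) (x : N.-tuple {ffun 'I_q -> 'I_n}) (i0 : 'I_q).
Hypothesis chain : r_chain (q - 1) x.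

Definition chain_coloring : coloring q N :=
  [ffun e => odflt i0 [pick i | tnth x e.2 i <= tnth x e.1 i]].

Lemma chain_coloring_edge (a b : 'I_N) i :
  a < b -> i != chain_coloring (a, b) -> tnth x a i < tnth x b i.
Proof.
move=> ab; rewrite ffunE /=; case: pickP => [j le_ba | no_le _] /=; last by rewrite ltnNge no_le.
exact: lt_r_pred_coord (r_chainP _ _ chain a b ab) le_ba.
Qed.

Lemma avoids_chain_coloring_incr i (z : 'I_N) s :
  avoids chain_coloring i (z :: s) -> size s + tnth x z i <= tnth x (last z s) i.
Proof.
elim: s z => [|w s IHs] z //; rewrite /avoids /= inE negb_or.
move=> /andP[/andP[zw w_sorted] /andP[iNzw iNs]].
have := IHs w; rewrite /avoids /= w_sorted iNs => /(_ isT).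
have := chain_coloring_edge zw iNzw; lia.
Qed.

Lemma f_K_chain_coloring : f_K (q - 1) chain_coloring <= n.
Proof.
apply/f_K_leP => -[//|z s]; rewrite good_path_predE ?(leq_ltn_trans (leq0n i0)) //.
case/existsP => i /avoids_chain_coloring_incr /=; have := ltn_ord (tnth x (last z s) i); lia.
Qed.

End ChainColoring.

Theorem proposition3p1 (q N n : nat) :
  (2 <= q)%N -> (0 < N)%N -> (0 < n)%N ->
  (f_N q (q - 1) N <= n)%N <-> (N <= F_N q (q - 1) n)%N.
Proof.
move=> q_ge2 _ _; have q_gt0 : 0 < q := ltnW q_ge2.
split=> [/(f_N_leP _ _ _ q_gt0) [c le_n] | /F_N_witness [x chain]].
  by apply: F_N_ge (depth_chain le_n); rewrite subn_gt0.
apply/(f_N_leP _ _ _ q_gt0); exists (chain_coloring x (Ordinal q_gt0)).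
exact: f_K_chain_coloring.
Qed.
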